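(* Let $I_H=\{1,\dots,N\}$ and $I_O=\{1,\dots,M\}$, let $\mathcal{H}$ be an $N$-dimensional Hilbert space with orthonormal basis $\{|i\rangle\}_{i\in I_H}$ and $\mathcal{K}$ an $M$-dimensional Hilbert space with orthonormal basis $\{|e_k\rangle\}_{k\in I_O}$. Fix $n$, a stochastic matrix $\Pi_n=(\Pi_{n;ij})_{i,j\in I_H}$ and an emission kernel $(Q^{(n)}_j(k))_{j\in I_H,k\in I_O}$ (nonnegative, $\sum_kQ^{(n)}_j(k)=1$). Define $V_{H;n}|i\rangle=\sum_{j}\sqrt{\Pi_{n;ij}}\,|i\rangle\otimes|j\rangle$, $V_{H,O;n}|j\rangle=\sum_{k}\sqrt{Q^{(n)}_j(k)}\,|j\rangle\otimes|e_k\rangle$, $\mathcal{E}_{H;n}(X)=V_{H;n}^*XV_{H;n}$ on $\mathcal{B}(\mathcal{H}\otimes\mathcal{H})$, $\mathcal{E}_{H,O;n}(Y)=V_{H,O;n}^*YV_{H,O;n}$ on $\mathcal{B}(\mathcal{H}\otimes\mathcal{K})$, and \[\mathcal{F}^{(n)}_{a_n,b_n}(a_{n+1})=\mathcal{E}_{H;n}\bigl(\mathcal{E}_{H,O;n}(a_n\otimes b_n)\otimes a_{n+1}\bigr),\qquad \mathcal{G}^{(n)}_{a_n,b_n}(a_{n+1})=\mathcal{E}_{H,O;n}\bigl(\mathcal{E}_{H;n}(a_n\otimes a_{n+1})\otimes b_n\bigr).\] If the observables are diagonal in the given bases, $a_n=\sum_i\alpha_i|i\rangle\langle i|$, $a_{n+1}=\sum_j\alpha'_j|j\rangle\langle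 j|$, $b_n=\sum_k\beta_k|e_k\rangle\langle e_k|$ with complex coefficients, then \[\mathcal{F}^{(n)}_{a_n,b_n}(a_{n+1})=\mathcal{G}^{(n)}_{a_n,b_n}(a_{n+1})=\sum_{i\in I_H}\alpha_i\Bigl(\sum_{k\in I_O}Q^{(n)}_i(k)\beta_k\Bigr)\Bigl(\sum_{j\in I_H}\Pi_{n;ij}\alpha'_j\Bigr)|i\rangle\langle i|.\]
   Context: A stochastic matrix has nonnegative entries with $\sum_j\Pi_{n;ij}=1$ for every $i$; the maps $V_{H;n},V_{H,O;n}$ are then isometries. $\mathcal{F}^{(n)}$ and $\mathcal{G}^{(n)}$ are the conventional (emission–then–transition) and causal (transition–then–emission) block maps of the hidden quantum Markov model obtained by entangled lifting of a classical hidden Markov model. *)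

(* Complex numbers are R[i] = complex R over a real closed
   field R (e.g. the real numbers); operators on C^N are N x N matrices,
   acting on column vectors; |i>⊗|j> is the basis vector of index
   mxtens_index (i, j), consistent with the Kronecker product tensmx. *)
From HB Require Import structures.
From mathcomp Require Import all_boot all_order all_algebra.
From mathcomp Require Export mxtens complex.
Set Implicit Arguments. Unset Strict Implicit. Unset Printing Implicit Defensive.
Import Order.TTheory GRing.Theory Num.Theory.
Local Open Scope ring_scope.
Local Open Scope complex_scope.

Section Defs.
Variable R : rcfType.
Local Notation C := R[i].

Definition adjmx m n (A : 'M[C]_(m, n)) : 'M[C]_(n, m) :=
  (map_mx (fun z : C => Num.conj z) A)^T.

Definition stochastic m n (P : 'M[R]_(m, n)) : Prop :=
  (forall i j, 0 <= P i j) /\ (forall i, \sum_j P i j = 1).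

Definition VH N (Pi : 'M[R]_N) : 'M[C]_(N * N, N) :=
  \sum_(i < N) \sum_(j < N)
     (Num.sqrt (Pi i j))%:C *: delta_mx (mxtens_index (i, j)) i.

Definition VHO N M (Q : 'M[R]_(N, M)) : 'M[C]_(N * M, N) :=
  \sum_(j < N) \sum_(k < M)
     (Num.sqrt (Q j k))%:C *: delta_mx (mxtens_index (j, k)) j.

Definition EH N (Pi : 'M[R]_N) (X : 'M[C]_(N * N)) : 'M[C]_N :=
  adjmx (VH Pi) *m X *m VH Pi.

Definition EHO N M (Q : 'M[R]_(N, M)) (Y : 'M[C]_(N * M)) : 'M[C]_N :=
  adjmx (VHO Q) *m Y *m VHO Q.

Definition Fmap N M (Pi : 'M[R]_N) (Q : 'M[R]_(N, M))
  (a : 'M[C]_N) (b : 'M[C]_M) (a' : 'M[C]_N) : 'M[C]_N :=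
  EH Pi (EHO Q (a *t b) *t a').

Definition Gmap N M (Pi : 'M[R]_N) (Q : 'M[R]_(N, M))
  (a : 'M[C]_N) (b : 'M[C]_M) (a' : 'M[C]_N) : 'M[C]_N :=
  EHO Q (EH Pi (a *t a') *t b).

End Defs.

(* EH and EHO are compressions X |-> V^* X V by an entangled lifting
   V : |i> |-> sum_j sqrt(P_ij) |i>⊗|j>.  Since V maps |i> into
   span{|i>⊗|j>}, the compression of D ⊗ D' with D, D' diagonal is again
   diagonal, with i-th entry d_i * sum_j P_ij e_j: the square roots recombine
   into P_ij, which is the only place where nonnegativity is used.  Applying this twice, in
   either order, gives diagonal matrices whose entries differ only in the
   order of two scalar factors. *)
From HB Require Import structures.
From mathcomp Require Import all_boot all_order all_algebra.
From mathcomp Require Import mxtens complex.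
Import Order.TTheory GRing.Theory Num.Theory.
Local Open Scope ring_scope.
Local Open Scope complex_scope.

Lemma mxtens_index_inj m n : injective (@mxtens_index m n).
Proof. exact: can_inj (@mxtens_indexK m n). Qed.

Lemma big_mxtens_index (V : nmodType) m n (F : 'I_(m * n) -> V) :
  \sum_k F k = \sum_(i < m) \sum_(j < n) F (mxtens_index (i, j)).
Proof.
rewrite pair_big (reindex (@mxtens_index m n)) /=; first by apply: eq_bigr => -[].
by exists (@mxtens_unindex m n) => k _; rewrite (mxtens_indexK, mxtens_unindexK).
Qed.

Lemma tensmx_diag (T : comPzRingType) m n (d : 'rV[T]_m) (e : 'rV[T]_n) :
  diag_mx d *t diag_mx e =
  diag_mx (\row_k (d 0 (@mxtens_unindex m n k).1 * e 0 (@mxtens_unindex m n k).2)).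
Proof.
apply/matrixP => k k'.
case: k / (mxtens_indexP k) => i j; case: k' / (mxtens_indexP k') => i' j'.
rewrite tensmxE !mxE !mxtens_indexK (inj_eq (@mxtens_index_inj m n)) xpair_eqE.
by case: (i == i'); case: (j == j'); rewrite ?mulr0n ?mul0rn ?mulr1n ?mul0r ?mulr0.
Qed.

Section EntangledLifting.
Variable R : rcfType.
Local Notation C := R[i].

Lemma VHOE N K (P : 'M[R]_(N, K)) i j c :
  VHO P (mxtens_index (i, j)) c = (Num.sqrt (P i j))%:C *+ (i == c).
Proof.
rewrite /VHO summxE (bigD1 i) //= summxE (bigD1 j) //= !mxE eqxx /=.
rewrite [X in _ + X + _]big1 ?addr0 => [|j' j'j]; last first.
  by rewrite !mxE (inj_eq (@mxtens_index_inj N K)) xpair_eqE eqxx eq_sym (negbTE j'j) mulr0.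
rewrite big1 ?addr0 => [|i' i'i]; first by rewrite mulr_natr eq_sym.
rewrite summxE big1 // => j' _.
by rewrite !mxE (inj_eq (@mxtens_index_inj N K)) xpair_eqE eq_sym (negbTE i'i) mulr0.
Qed.

Lemma EHO_tens_diag N K (P : 'M[R]_(N, K)) (d : 'I_N -> C) (e : 'I_K -> C) :
  (forall i j, 0 <= P i j) ->
  EHO P (diag_mx (\row_i d i) *t diag_mx (\row_j e j))
  = diag_mx (\row_i (d i * \sum_j (P i j)%:C * e j)).
Proof.
move=> P_ge0; have conj_real (x : R) : Num.conj x%:C = x%:C := conjc_real x.
rewrite /EHO tensmx_diag mul_mx_diag; apply/matrixP => c c'.
rewrite mxE big_mxtens_index.
under eq_bigr => i _ do under eq_bigr => j _ do rewrite !mxE mxtens_indexK !VHOE.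
rewrite (bigD1 c) //= [X in _ + X]big1 ?addr0 => [|i ic]; last first.
  by apply: big1 => j _; rewrite (negbTE ic) mulr0n conjC0 !mul0r.
rewrite !mxE eqxx; case: (c == c'); last first.
  by rewrite mulr0n big1 // => j _; rewrite mulr0n mulr0.
rewrite mulr1n mulr_sumr; apply: eq_bigr => j _.
by rewrite !mulr1n conj_real mulrAC -rmorphM -expr2 sqr_sqrtr // mulrCA.
Qed.

(* [VH Pi] and [VHO Pi] have the same body, so [EH Pi] is [EHO Pi]. *)
Lemma EH_tens_diag N (Pi : 'M[R]_N) (d e : 'I_N -> C) :
  (forall i j, 0 <= Pi i j) ->
  EH Pi (diag_mx (\row_i d i) *t diag_mx (\row_j e j))
  = diag_mx (\row_i (d i * \sum_j (Pi i j)%:C * e j)).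
Proof. exact: EHO_tens_diag. Qed.

End EntangledLifting.

Theorem mainTheorem4 (R : rcfType) (N M : nat)
  (Pi : 'M[R]_N) (Q : 'M[R]_(N, M))
  (hPi : stochastic Pi) (hQ : stochastic Q)
  (alpha alpha' : 'I_N -> R[i]) (beta : 'I_M -> R[i]) :
  let a := diag_mx (\row_i alpha i) in
  let a' := diag_mx (\row_j alpha' j) in
  let b := diag_mx (\row_k beta k) in
  Fmap Pi Q a b a' = Gmap Pi Q a b a' /\
  Gmap Pi Q a b a' =
    \sum_(i < N) (alpha i * (\sum_(k < M) (Q i k)%:C * beta k)
                          * (\sum_(j < N) (Pi i j)%:C * alpha' j))
                 *: delta_mx i i.
Proof.
move=> a a' b; case: hPi => Pi_ge0 _; case: hQ => Q_ge0 _.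
pose D := diag_mx (\row_i (alpha i * (\sum_(k < M) (Q i k)%:C * beta k)
                                * (\sum_(j < N) (Pi i j)%:C * alpha' j))).
have F_diag : Fmap Pi Q a b a' = D.
  by rewrite /Fmap EHO_tens_diag // EH_tens_diag.
have G_diag : Gmap Pi Q a b a' = D.
  rewrite /Gmap EH_tens_diag // EHO_tens_diag //.
  by rewrite /D; congr diag_mx; apply/rowP => i; rewrite !mxE mulrAC.
split; first by rewrite F_diag G_diag.
by rewrite G_diag /D diag_mx_sum_delta; apply: eq_bigr => i _; rewrite mxE.
Qed.
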